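(* Let $N>4$ be an integer. Consider the problem of finding $z\in C^2(\mathbb{R})$ with $$-z''(t)+(N-4)z'(t)+(2N-4)z(t)=\frac{N-1}{2}\,z(t)^2\qquad (t\in\mathbb{R}),$$ $$\lim_{t\to-\infty}e^tz(t)=0=\lim_{t\to+\infty}e^tz(t).$$ This problem has a continuum of non-trivial positive solutions; in particular, there exist uncountably many pairwise distinct solutions $z$ with $z(t)>0$ for all $t\in\mathbb{R}$.
   Context: Via $w=e^tz$, this problem is equivalent to the radial entire problem $-w''+(N-2)w'+(N-1)w=\frac{N-1}{2}e^{-t}w^2$ on $\mathbb{R}$ with $w(\pm\infty)=0$, coming from $\Delta^2u=S_2[u]$ in $\mathbb{R}^N$. *)

From Stdlib Require Import Reals.
From Coquelicot Require Import Coquelicot.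
Open Scope R_scope.

Definition C2 (z : R -> R) : Prop :=
  (forall t, ex_derive z t) /\
  (forall t, ex_derive (Derive z) t) /\
  (forall t, continuous (Derive (Derive z)) t).

Definition is_solution (N : nat) (z : R -> R) : Prop :=
  C2 z /\
  (forall t : R,
     - Derive (Derive z) t + (INR N - 4) * Derive z t + (2 * INR N - 4) * z t
     = (INR N - 1) / 2 * (z t) ^ 2) /\
  is_lim (fun t => exp t * z t) m_infty 0 /\
  is_lim (fun t => exp t * z t) p_infty 0.

Definition positive_fun (z : R -> R) : Prop := forall t : R, 0 < z t.

From Stdlib Require Import Reals Lra Lia Classical ClassicalEpsilon.
From Coquelicot Require Import Coquelicot.
Open Scope R_scope.

(* Write the equation as the system [z' = v], [v' = (N - 4) v + (2N - 4) z - (N - 1)/2 z^2].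
   With the quadratic term frozen outside [[-6, 6]], Picard iteration gives global solutions
   depending Lipschitz-continuously on the data. Shoot from [z(0) = 1], [v(0) = -s]: the [s] for
   which [v] turns positive while [z > 0], and those for which [z] turns negative while [v < 0],
   form disjoint open sets, the first containing [s = 0] but not [s = N]; so some [s > 0] lies in
   neither. For it, [z] stays in [(0, 1]] for [t >= 0] and decays like [e^(-3t/2)]. The energy
   [v^2/2 + V(z)], [V(z) = -(N - 2) z^2 + (N - 1)/6 z^3], never decreases, hence is [<= 0] at
   [t = 0], which keeps [z] in [(0, 6)] for [t <= 0] because [V(0) = 0 < V(6)]. This [z] is a
   positive solution, and as [z > 0] tends to [0] at [+oo], its translates are pairwise
   distinct: there are as many of them as reals. *)

Lemma exp_le_mono x y : x <= y -> exp x <= exp y.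
Proof. intros [H|H]; [left; apply exp_increasing, H|rewrite H; apply Rle_refl]. Qed.

Lemma exp_ge1 x : 0 <= x -> 1 <= exp x.
Proof. intros H. rewrite <- exp_0. apply exp_le_mono, H. Qed.

Lemma exp_mul_exp_neg x : exp x * exp (- x) = 1.
Proof. rewrite <- exp_plus, Rplus_opp_r. apply exp_0. Qed.

Lemma ex_RInt_cont (f : R -> R) a b : (forall s, continuous f s) -> ex_RInt f a b.
Proof. intros Hf; apply (@ex_RInt_continuous R_CompleteNormedModule); auto. Qed.

Lemma is_derive_RInt_cont (f : R -> R) c t : (forall s, continuous f s) ->
  is_derive (fun t => c + RInt f 0 t) t (f t).
Proof.
  intros Hf.
  assert (HI : is_derive (RInt f 0) t (f t)).
  { apply is_derive_RInt with (a := 0); [|apply Hf].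
    apply filter_forall. intros b. apply RInt_correct, ex_RInt_cont, Hf. }
  assert (H := is_derive_plus _ _ t _ _ (is_derive_const c t) HI).
  unfold plus, zero in H; simpl in H. rewrite Rplus_0_l in H. exact H.
Qed.

Lemma continuous_RInt_cont (f : R -> R) c t : (forall s, continuous f s) ->
  continuous (fun t => c + RInt f 0 t) t.
Proof.
  intros Hf. apply (@ex_derive_continuous R_AbsRing R_NormedModule).
  eexists. apply is_derive_RInt_cont, Hf.
Qed.

Lemma RInt_minus_cont (f g : R -> R) a b :
  (forall s, continuous f s) -> (forall s, continuous g s) ->
  RInt (fun s => f s - g s) a b = RInt f a b - RInt g a b.
Proof.
  intros Hf Hg. apply (RInt_minus (V := R_CompleteNormedModule)); apply ex_RInt_cont; auto.
Qed.

Lemma MVT_lower_bound (f df : R -> R) a b m : a <= b ->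
  (forall x, a <= x <= b -> is_derive f x (df x)) ->
  (forall x, a <= x <= b -> m <= df x) -> m * (b - a) <= f b - f a.
Proof.
  intros Hab Hd Hm.
  destruct (MVT_gen f a b df) as [c [Hc ->]];
    rewrite ?Rmin_left, ?Rmax_right in * by lra.
  - intros x Hx. apply Hd. lra.
  - intros x Hx. apply continuity_pt_filterlim, (@ex_derive_continuous R_AbsRing R_NormedModule).
    exists (df x). apply Hd, Hx.
  - apply Rmult_le_compat_r; [lra|]. apply Hm, Hc.
Qed.

Lemma MVT_upper_bound (f df : R -> R) a b m : a <= b ->
  (forall x, a <= x <= b -> is_derive f x (df x)) ->
  (forall x, a <= x <= b -> df x <= m) -> f b - f a <= m * (b - a).
Proof.
  intros Hab Hd Hm.
  assert (H := MVT_lower_bound (fun x => - f x) (fun x => - df x) a b (- m) Hab).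
  enough (- m * (b - a) <= - f b - - f a) by lra.
  apply H; [intros x Hx; apply (is_derive_opp f), Hd, Hx|intros x Hx; specialize (Hm x Hx); lra].
Qed.

Lemma monotone_of_derive_nonneg (f df : R -> R) a b : a <= b ->
  (forall x, a <= x <= b -> is_derive f x (df x)) ->
  (forall x, a <= x <= b -> 0 <= df x) -> f a <= f b.
Proof. intros Hab Hd Hm. assert (H := MVT_lower_bound f df a b 0 Hab Hd Hm). lra. Qed.

Lemma abs_diff_le_of_derive (h dh g dg : R -> R) a b : a <= b ->
  (forall x, a <= x <= b -> is_derive h x (dh x)) ->
  (forall x, a <= x <= b -> is_derive g x (dg x)) ->
  (forall x, a <= x <= b -> Rabs (dh x) <= dg x) -> Rabs (h b - h a) <= g b - g a.
Proof.
  intros Hab Hh Hg Hb.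
  assert (H1 : g a - h a <= g b - h b).
  { apply (monotone_of_derive_nonneg (fun x => g x - h x) (fun x => dg x - dh x) a b Hab).
    - intros x Hx. apply (is_derive_minus g h); auto.
    - intros x Hx. specialize (Hb x Hx). assert (H := Rle_abs (dh x)). lra. }
  assert (H2 : g a + h a <= g b + h b).
  { apply (monotone_of_derive_nonneg (fun x => g x + h x) (fun x => dg x + dh x) a b Hab).
    - intros x Hx. apply (is_derive_plus g h); auto.
    - intros x Hx. specialize (Hb x Hx). assert (H := Rle_abs (- dh x)).
      rewrite Rabs_Ropp in H. lra. }
  apply Rabs_le. lra.
Qed.

Lemma abs_RInt_le_exp (f : R -> R) C lam t : 0 < lam -> (forall s, continuous f s) ->
  (forall s, Rabs (f s) <= C * exp (lam * Rabs s)) ->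
  Rabs (RInt f 0 t) <= C * (exp (lam * Rabs t) - 1) / lam.
Proof.
  intros Hl Hf Hb.
  assert (HI : forall x, is_derive (RInt f 0) x (f x)).
  { intros x. apply (is_derive_ext (fun t => 0 + RInt f 0 t)).
    - intros s. apply Rplus_0_l.
    - apply is_derive_RInt_cont, Hf. }
  assert (H0 : RInt f 0 0 = 0) by exact (RInt_point (V := R_CompleteNormedModule) 0 f).
  destruct (Rle_or_lt 0 t) as [Ht|Ht].
  - rewrite (Rabs_pos_eq t) by lra.
    replace (RInt f 0 t) with (RInt f 0 t - RInt f 0 0) by lra.
    replace (C * (exp (lam * t) - 1) / lam) with
      (C * exp (lam * t) / lam - C * exp (lam * 0) / lam) by (rewrite Rmult_0_r, exp_0; field; lra).
    apply (abs_diff_le_of_derive (RInt f 0) f (fun s => C * exp (lam * s) / lam)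
      (fun s => C * exp (lam * s))); auto.
    + intros x _. auto_derive; auto. field. lra.
    + intros x Hx. rewrite <- (Rabs_pos_eq x) at 2 by lra. apply Hb.
  - rewrite (Rabs_left t) by lra.
    replace (RInt f 0 t) with (- (RInt f 0 0 - RInt f 0 t)) by lra.
    rewrite Rabs_Ropp.
    replace (C * (exp (lam * - t) - 1) / lam) with
      (- C * exp (- lam * 0) / lam - - C * exp (- lam * t) / lam)
      by (rewrite Rmult_0_r, exp_0; replace (lam * - t) with (- lam * t) by ring; field; lra).
    apply (abs_diff_le_of_derive (RInt f 0) f (fun s => - C * exp (- lam * s) / lam)
      (fun s => C * exp (- lam * s))); auto; try lra.
    + intros x _. auto_derive; auto. field. lra.
    + intros x Hx. replace (- lam * x) with (lam * Rabs x) by (rewrite Rabs_left1 by lra; ring).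
      apply Hb.
Qed.

Lemma dist_shift_RInt_le (f g : R -> R) a b C lam t : 0 < lam ->
  (forall s, continuous f s) -> (forall s, continuous g s) ->
  (forall s, Rabs (f s - g s) <= C * exp (lam * Rabs s)) ->
  Rabs ((a + RInt f 0 t) - (b + RInt g 0 t)) <= Rabs (a - b) + C * (exp (lam * Rabs t) - 1) / lam.
Proof.
  intros Hl Hf Hg Hb.
  replace (a + RInt f 0 t - (b + RInt g 0 t)) with ((a - b) + RInt (fun s => f s - g s) 0 t)
    by (rewrite RInt_minus_cont by assumption; ring).
  eapply Rle_trans; [apply Rabs_triang|]. apply Rplus_le_compat_l.
  apply abs_RInt_le_exp; [exact Hl| |exact Hb].
  intros s. apply (continuous_minus (V := R_NormedModule)); auto.
Qed.

Lemma continuous_pos_near (g : R -> R) c : continuous g c -> 0 < g c ->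
  exists d, 0 < d /\ forall x, Rabs (x - c) < d -> g c / 2 < g x.
Proof.
  intros Hg Hc.
  destruct (proj1 (filterlim_locally (F := locally c) g (g c)) Hg (mkposreal (g c / 2) ltac:(lra)))
    as [d Hd].
  exists d. split; [apply cond_pos|]. intros x Hx.
  assert (H : Rabs (g x - g c) < g c / 2) by exact (Hd x Hx).
  apply Rabs_def2 in H. lra.
Qed.

Lemma continuous_neg_near (g : R -> R) c : continuous g c -> g c < 0 ->
  exists d, 0 < d /\ forall x, Rabs (x - c) < d -> g x < g c / 2.
Proof.
  intros Hg Hc.
  destruct (continuous_pos_near (fun x => - g x) c) as [d [Hd H]].
  - apply (continuous_opp g), Hg.
  - lra.
  - exists d. split; [exact Hd|]. intros x Hx. specialize (H x Hx). lra.
Qed.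

Lemma continuous_lipschitz2 (h a b : R -> R) K s : 0 <= K ->
  (forall x, Rabs (h x - h s) <= K * (Rabs (a x - a s) + Rabs (b x - b s))) ->
  continuous a s -> continuous b s -> continuous h s.
Proof.
  intros HK Hh Ha Hb. apply filterlim_locally. intros eps.
  set (e := eps / (2 * (K + 1))).
  assert (He : 0 < e) by (apply Rdiv_lt_0_compat; [apply cond_pos|lra]).
  generalize (filter_and _ _ (proj1 (filterlim_locally a (a s)) Ha (mkposreal e He))
                             (proj1 (filterlim_locally b (b s)) Hb (mkposreal e He))).
  apply filter_imp. intros x [H1 H2].
  change (Rabs (a x - a s) < e) in H1. change (Rabs (b x - b s) < e) in H2.
  change (Rabs (h x - h s) < eps).
  assert (Heps : 2 * (K + 1) * e = eps) by (unfold e; field; lra).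
  specialize (Hh x). assert (0 <= Rabs (a x - a s)) by apply Rabs_pos.
  assert (0 <= Rabs (b x - b s)) by apply Rabs_pos. nra.
Qed.

Lemma continuous_of_uniform_approx (h : R -> R) s :
  (forall eps, 0 < eps -> exists g, continuous g s /\
     forall x, Rabs (x - s) <= 1 -> Rabs (h x - g x) <= eps) ->
  continuous h s.
Proof.
  intros H. apply filterlim_locally. intros eps.
  assert (He : 0 < eps / 3) by (generalize (cond_pos eps); lra).
  destruct (H (eps / 3) He) as [g [Hg Hhg]].
  generalize (filter_and _ _ (proj1 (filterlim_locally g (g s)) Hg (mkposreal _ He))
    (locally_ball s (mkposreal 1 Rlt_0_1))).
  apply filter_imp. intros x [H1 H2].
  change (Rabs (g x - g s) < eps / 3) in H1. change (Rabs (x - s) < 1) in H2.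
  change (Rabs (h x - h s) < eps).
  assert (A1 := Hhg x (Rlt_le _ _ H2)).
  assert (A2 := Hhg s ltac:(rewrite Rminus_diag, Rabs_R0; lra)).
  apply Rabs_def2 in H1. apply Rabs_le_between in A1, A2. apply Rabs_def1; lra.
Qed.

Lemma is_lim_seq_geom_half (c : R) : is_lim_seq (fun n => c * (/ 2) ^ n) 0.
Proof.
  replace (Finite 0) with (Rbar_mult c 0) by (simpl; f_equal; ring).
  apply is_lim_seq_scal_l, is_lim_seq_geom. rewrite Rabs_pos_eq; lra.
Qed.

Lemma exists_geom_half_le (c eps : R) : 0 < eps -> exists n, c * (/ 2) ^ n <= eps.
Proof.
  intros He.
  destruct (proj2 (is_lim_seq_spec _ 0) (is_lim_seq_geom_half c) (mkposreal eps He)) as [n Hn].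
  exists n. specialize (Hn n (le_n n)). simpl in Hn. rewrite Rminus_0_r in Hn.
  assert (H := Rle_abs (c * (/ 2) ^ n)). lra.
Qed.

Lemma le_of_le_plus_geom_half x y c : (forall n, x <= y + c * (/ 2) ^ n) -> x <= y.
Proof.
  intros H. destruct (Rle_or_lt x y) as [|Hxy]; [assumption|].
  assert (Hd : 0 < (x - y) / 2) by lra.
  destruct (exists_geom_half_le c _ Hd) as [n Hn]. specialize (H n). lra.
Qed.

Lemma dist_Lim_seq_le (u e : nat -> R) : is_lim_seq e 0 ->
  (forall n m, (n <= m)%nat -> Rabs (u m - u n) <= e n) ->
  forall n, Rabs (real (Lim_seq u) - u n) <= e n.
Proof.
  intros He Hc.
  assert (Hex : ex_finite_lim_seq u).
  { apply ex_lim_seq_cauchy_corr. intros eps.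
    destruct (proj2 (is_lim_seq_spec e 0) He eps) as [N HN].
    assert (HeN : forall k, (N <= k)%nat -> e k < eps).
    { intros k Hk. specialize (HN k Hk). rewrite Rminus_0_r in HN.
      eapply Rle_lt_trans; [apply Rle_abs|exact HN]. }
    exists N. intros n m Hn Hm. destruct (Nat.le_ge_cases n m) as [Hnm|Hnm].
    - rewrite Rabs_minus_sym. eapply Rle_lt_trans; [apply Hc|apply HeN]; auto.
    - eapply Rle_lt_trans; [apply Hc|apply HeN]; auto. }
  destruct Hex as [l Hl]. rewrite (is_lim_seq_unique _ _ Hl). intros n.
  assert (Hl2 : is_lim_seq (fun m => Rabs (u (m + n)%nat - u n)) (Rabs (l - u n))).
  { apply (is_lim_seq_abs _ (Finite (l - u n))).
    apply (is_lim_seq_minus _ _ l (u n));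
      [apply (is_lim_seq_incr_n u n l), Hl|apply is_lim_seq_const|reflexivity]. }
  exact (is_lim_seq_le _ (fun _ => e n) _ _ (fun m => Hc n (m + n)%nat ltac:(lia)) Hl2
           (is_lim_seq_const _)).
Qed.

Lemma nonpos_of_neg_on_left (f : R -> R) a c : a < c -> continuous f c ->
  (forall x, a <= x < c -> f x < 0) -> f c <= 0.
Proof.
  intros Hac Hf Hneg. destruct (Rle_or_lt (f c) 0) as [|Hpos]; [assumption|exfalso].
  destruct (continuous_pos_near f c Hf Hpos) as [d [Hd Hnear]].
  set (y := Rmax a (c - d / 2)).
  assert (Hy : a <= y < c) by (unfold y, Rmax; destruct (Rle_dec a (c - d / 2)); lra).
  assert (Hyc : Rabs (y - c) < d).
  { unfold y, Rmax. destruct (Rle_dec a (c - d / 2)); rewrite Rabs_left; lra. }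
  specialize (Hnear y Hyc). specialize (Hneg y Hy). lra.
Qed.

Lemma exists_first_zero (f : R -> R) a b : a <= b -> (forall x, continuous f x) ->
  f a < 0 -> 0 <= f b ->
  exists c, a < c <= b /\ f c = 0 /\ forall x, a <= x < c -> f x < 0.
Proof.
  intros Hab Hf Ha Hb.
  set (E := fun x => a <= x <= b /\ forall y, a <= y <= x -> f y < 0).
  assert (HaE : E a) by (split; [lra|intros y Hy; replace y with a by lra; exact Ha]).
  destruct (completeness E) as [c [Hub Hlub]].
  { exists b. intros x [Hx _]. lra. }
  { exists a. exact HaE. }
  assert (Hac : a <= c) by (apply Hub, HaE).
  assert (Hcb : c <= b) by (apply Hlub; intros x [Hx _]; lra).
  assert (Hbelow : forall x, a <= x < c -> f x < 0).
  { intros x Hx. apply NNPP. intros Hfx.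
    enough (c <= x) by lra. apply Hlub. intros e [He1 He2].
    destruct (Rle_or_lt e x) as [|Hxe]; [assumption|]. exfalso. apply Hfx, He2. lra. }
  assert (Hfc : f c = 0).
  { destruct (Rtotal_order (f c) 0) as [Hlt|[Heq|Hgt]]; [exfalso| exact Heq|exfalso].
    - destruct (continuous_neg_near f c (Hf c) Hlt) as [d [Hd Hnear]].
      assert (Hcb' : c < b) by (destruct Hcb; [assumption|subst; lra]).
      assert (HE : E (Rmin (c + d / 2) b)).
      { assert (Rmin (c + d / 2) b <= c + d / 2) by apply Rmin_l.
        split; [split; [apply Rmin_glb; lra|apply Rmin_r]|].
        intros y Hy. destruct (Rlt_or_le y c); [apply Hbelow; lra|].
        assert (Hyc : Rabs (y - c) < d) by (rewrite Rabs_pos_eq; lra).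
        specialize (Hnear y Hyc). lra. }
      specialize (Hub _ HE). unfold Rmin in Hub. destruct (Rle_dec (c + d / 2) b); lra.
    - assert (Hac' : a < c) by (destruct Hac; [assumption|subst; lra]).
      assert (H := nonpos_of_neg_on_left f a c Hac' (Hf c) Hbelow). lra. }
  exists c. split; [split; [destruct Hac; [assumption|subst; lra]|exact Hcb]|split; assumption].
Qed.

Lemma exists_right_increase (f df : R -> R) u eps : 0 < eps ->
  (forall x, is_derive f x (df x)) -> continuous df u -> 0 < df u ->
  exists u', u < u' < u + eps /\ f u < f u'.
Proof.
  intros He Hd Hc Hp.
  destruct (continuous_pos_near df u Hc Hp) as [d [Hd0 Hnear]].
  set (u' := u + Rmin eps d / 2).
  assert (Hm : 0 < Rmin eps d) by (apply Rmin_pos; lra).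
  assert (Hm1 := Rmin_l eps d). assert (Hm2 := Rmin_r eps d).
  exists u'. split; [unfold u'; lra|].
  assert (H : df u / 2 * (u' - u) <= f u' - f u).
  { apply (MVT_lower_bound f df); [unfold u'; lra|intros; apply Hd|].
    intros x Hx. apply Rlt_le, Hnear. rewrite Rabs_pos_eq; unfold u' in Hx; lra. }
  assert (0 < df u / 2 * (u' - u)) by (apply Rmult_lt_0_compat; unfold u'; lra). lra.
Qed.

Lemma nonpos_of_exp_decay_bound x A g t0 : 0 < g ->
  (forall T, t0 <= T -> x <= A * exp (- g * T)) -> x <= 0.
Proof.
  intros Hg H. destruct (Rle_or_lt x 0) as [|Hx]; [assumption|exfalso].
  set (T := Rmax t0 (A / (x * g))).
  assert (HT : A / (x * g) <= T) by apply Rmax_r.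
  assert (HAT : A <= x * g * T).
  { apply (Rmult_le_compat_l (x * g)) in HT; [|nra].
    replace (x * g * (A / (x * g))) with A in HT by (field; nra). exact HT. }
  assert (Hbound := H T (Rmax_l _ _)).
  assert (Hexp := exp_ineq1_le (g * T)).
  assert (Hinv : exp (g * T) * exp (- (g * T)) = 1) by apply exp_mul_exp_neg.
  replace (- g * T) with (- (g * T)) in Hbound by ring.
  assert (Hpos := exp_pos (- (g * T))).
  assert (x * exp (g * T) <= A) by nra.
  nra.
Qed.

(** * Picard iteration for Lipschitz planar systems *)

Definition gap (p q : (R -> R) * (R -> R)) (t : R) : R :=
  Rabs (fst p t - fst q t) + Rabs (snd p t - snd q t).

Definition continuous_pair (p : (R -> R) * (R -> R)) : Prop :=
  forall t, continuous (fst p) t /\ continuous (snd p) t.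

Lemma gap_fst_le p q t : Rabs (fst p t - fst q t) <= gap p q t.
Proof. unfold gap. generalize (Rabs_pos (snd p t - snd q t)). lra. Qed.

Lemma gap_snd_le p q t : Rabs (snd p t - snd q t) <= gap p q t.
Proof. unfold gap. generalize (Rabs_pos (fst p t - fst q t)). lra. Qed.

Lemma gap_nonneg p q t : 0 <= gap p q t.
Proof. generalize (gap_fst_le p q t) (Rabs_pos (fst p t - fst q t)). lra. Qed.

Lemma gap_sym p q t : gap p q t = gap q p t.
Proof. unfold gap. rewrite (Rabs_minus_sym (fst p t)), (Rabs_minus_sym (snd p t)). reflexivity. Qed.

Lemma gap_triangle p q r t : gap p r t <= gap p q t + gap q r t.
Proof.
  unfold gap.
  assert (H1 := Rabs_triang (fst p t - fst q t) (fst q t - fst r t)).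
  assert (H2 := Rabs_triang (snd p t - snd q t) (snd q t - snd r t)).
  replace (fst p t - fst q t + (fst q t - fst r t)) with (fst p t - fst r t) in H1 by ring.
  replace (snd p t - snd q t + (snd q t - snd r t)) with (snd p t - snd r t) in H2 by ring.
  lra.
Qed.

Section Picard.

Variables (F : R -> R -> R) (L : R).
Hypothesis L_ge1 : 1 <= L.
Hypothesis F_lipschitz : forall a b c d, Rabs (F a b - F c d) <= L * (Rabs (a - c) + Rabs (b - d)).

Definition growth_rate := 4 * L.

Lemma growth_rate_pos : 0 < growth_rate.
Proof. unfold growth_rate; lra. Qed.

Lemma exp_growth_ge1 t : 1 <= exp (growth_rate * Rabs t).
Proof. apply exp_ge1, Rmult_le_pos; [left; apply growth_rate_pos|apply Rabs_pos]. Qed.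

Lemma continuous_F_comp (a b : R -> R) s : continuous a s -> continuous b s ->
  continuous (fun x => F (a x) (b x)) s.
Proof. apply (continuous_lipschitz2 _ a b L); [lra|intros x; apply F_lipschitz]. Qed.

Definition picard_step (z0 v0 : R) (p : (R -> R) * (R -> R)) : (R -> R) * (R -> R) :=
  (fun t => z0 + RInt (snd p) 0 t, fun t => v0 + RInt (fun s => F (fst p s) (snd p s)) 0 t).

Fixpoint picard (z0 v0 : R) (n : nat) : (R -> R) * (R -> R) :=
  match n with
  | O => (fun _ => z0, fun _ => v0)
  | S k => picard_step z0 v0 (picard z0 v0 k)
  end.

Lemma continuous_picard_step z0 v0 p : continuous_pair p -> continuous_pair (picard_step z0 v0 p).
Proof.
  intros Hp t. split; apply continuous_RInt_cont; intros s; [apply Hp|].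
  apply continuous_F_comp; apply Hp.
Qed.

Lemma continuous_picard z0 v0 n : continuous_pair (picard z0 v0 n).
Proof.
  induction n as [|n IH]; [intros t; split; apply continuous_const|].
  apply continuous_picard_step, IH.
Qed.

(* In the weight [exp (4 L |t|)] one Picard step halves distances, as [(1 + L) / (4 L) <= 1/2]. *)
Lemma gap_picard_step z0 v0 z1 v1 p q C t : 0 <= C ->
  continuous_pair p -> continuous_pair q ->
  (forall s, gap p q s <= C * exp (growth_rate * Rabs s)) ->
  gap (picard_step z0 v0 p) (picard_step z1 v1 q) t
  <= Rabs (z0 - z1) + Rabs (v0 - v1) + C * (exp (growth_rate * Rabs t) - 1) / 2.
Proof.
  intros HC Hp Hq Hpq. unfold gap, picard_step; simpl.
  assert (Hz : Rabs (z0 + RInt (snd p) 0 t - (z1 + RInt (snd q) 0 t))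
               <= Rabs (z0 - z1) + C * (exp (growth_rate * Rabs t) - 1) / growth_rate).
  { apply dist_shift_RInt_le; [apply growth_rate_pos|apply Hp|apply Hq|].
    intros s. eapply Rle_trans; [apply gap_snd_le|apply Hpq]. }
  assert (Hv : Rabs (v0 + RInt (fun s => F (fst p s) (snd p s)) 0 t
                     - (v1 + RInt (fun s => F (fst q s) (snd q s)) 0 t))
               <= Rabs (v0 - v1) + L * C * (exp (growth_rate * Rabs t) - 1) / growth_rate).
  { apply dist_shift_RInt_le; [apply growth_rate_pos| | |].
    - intros s. apply continuous_F_comp; apply Hp.
    - intros s. apply continuous_F_comp; apply Hq.
    - intros s. eapply Rle_trans; [apply F_lipschitz|]. rewrite Rmult_assoc.
      apply Rmult_le_compat_l; [lra|apply Hpq]. }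
  assert (He := exp_growth_ge1 t).
  assert (C * (exp (growth_rate * Rabs t) - 1) / growth_rate
          + L * C * (exp (growth_rate * Rabs t) - 1) / growth_rate
          <= C * (exp (growth_rate * Rabs t) - 1) / 2).
  { unfold growth_rate. apply Rmult_le_reg_r with (4 * L); [lra|].
    field_simplify; [|lra]. assert (0 <= C * (exp (4 * L * Rabs t) - 1)).
    { apply Rmult_le_pos; [lra|]. unfold growth_rate in He. lra. }
    nra. }
  lra.
Qed.

Lemma gap_picard_data z0 v0 z1 v1 n t :
  gap (picard z0 v0 n) (picard z1 v1 n) t
  <= (Rabs (z0 - z1) + Rabs (v0 - v1)) * exp (growth_rate * Rabs t).
Proof.
  assert (HD : 0 <= Rabs (z0 - z1) + Rabs (v0 - v1))
    by (generalize (Rabs_pos (z0 - z1)) (Rabs_pos (v0 - v1)); lra).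
  revert t. induction n as [|n IH]; intros t; assert (He := exp_growth_ge1 t).
  - unfold gap; simpl. nra.
  - eapply Rle_trans; [apply (gap_picard_step _ _ _ _ _ _ _ _ HD);
      [apply continuous_picard|apply continuous_picard|exact IH]|].
    nra.
Qed.

Definition picard_scale z0 v0 := (Rabs v0 + Rabs (F z0 v0)) / growth_rate.

Lemma picard_scale_nonneg z0 v0 : 0 <= picard_scale z0 v0.
Proof.
  unfold picard_scale. apply Rmult_le_pos; [|left; apply Rinv_0_lt_compat, growth_rate_pos].
  generalize (Rabs_pos v0) (Rabs_pos (F z0 v0)). lra.
Qed.

Lemma gap_picard_succ z0 v0 n t :
  gap (picard z0 v0 (S n)) (picard z0 v0 n) t
  <= picard_scale z0 v0 * (/ 2) ^ n * exp (growth_rate * Rabs t).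
Proof.
  assert (HK := picard_scale_nonneg z0 v0).
  revert t. induction n as [|n IH]; intros t.
  - unfold gap; simpl. assert (E : forall a x : R, a + x - a = x) by (intros; ring). rewrite !E.
    assert (Hc : forall c, Rabs (RInt (fun _ => c) 0 t)
                           <= Rabs c * (exp (growth_rate * Rabs t) - 1) / growth_rate).
    { intros c. apply abs_RInt_le_exp; [apply growth_rate_pos|intros; apply continuous_const|].
      intros s. assert (He := exp_growth_ge1 s). generalize (Rabs_pos c). nra. }
    eapply Rle_trans; [apply Rplus_le_compat; apply Hc|].
    unfold picard_scale. assert (Hl := growth_rate_pos).
    generalize (Rabs_pos v0) (Rabs_pos (F z0 v0)). intros. 
    apply Rmult_le_reg_r with growth_rate; [exact Hl|]. field_simplify; lra.
  - assert (HC : 0 <= picard_scale z0 v0 * (/ 2) ^ n)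
      by (apply Rmult_le_pos; [exact HK|apply pow_le; lra]).
    eapply Rle_trans; [apply (gap_picard_step _ _ _ _ _ _ _ _ HC);
      [apply (continuous_picard _ _ (S n))|apply continuous_picard|exact IH]|].
    rewrite !Rminus_diag, Rabs_R0. simpl. assert (He := exp_growth_ge1 t). nra.
Qed.

Lemma gap_picard z0 v0 n m t : (n <= m)%nat ->
  gap (picard z0 v0 m) (picard z0 v0 n) t
  <= 2 * picard_scale z0 v0 * ((/ 2) ^ n - (/ 2) ^ m) * exp (growth_rate * Rabs t).
Proof.
  intros Hnm. induction Hnm as [|m Hnm IH].
  - unfold gap. rewrite !Rminus_diag, Rabs_R0. lra.
  - eapply Rle_trans; [apply (gap_triangle _ (picard z0 v0 m))|].
    assert (H := gap_picard_succ z0 v0 m t). simpl pow. nra.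
Qed.

Lemma gap_picard_le z0 v0 n m t : (n <= m)%nat ->
  gap (picard z0 v0 m) (picard z0 v0 n) t
  <= 2 * picard_scale z0 v0 * exp (growth_rate * Rabs t) * (/ 2) ^ n.
Proof.
  intros Hnm. eapply Rle_trans; [apply gap_picard, Hnm|].
  assert (HK := picard_scale_nonneg z0 v0). assert (He := exp_growth_ge1 t).
  assert (0 <= (/ 2) ^ m) by (apply pow_le; lra).
  assert (0 <= 2 * picard_scale z0 v0 * (/ 2) ^ m * exp (growth_rate * Rabs t))
    by (apply Rmult_le_pos; [apply Rmult_le_pos|]; lra).
  nra.
Qed.

Definition picard_lim (z0 v0 : R) : (R -> R) * (R -> R) :=
  (fun t => real (Lim_seq (fun n => fst (picard z0 v0 n) t)),
   fun t => real (Lim_seq (fun n => snd (picard z0 v0 n) t))).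

Lemma gap_picard_lim z0 v0 n t :
  gap (picard_lim z0 v0) (picard z0 v0 n) t
  <= 4 * picard_scale z0 v0 * exp (growth_rate * Rabs t) * (/ 2) ^ n.
Proof.
  set (e := fun n => 2 * picard_scale z0 v0 * exp (growth_rate * Rabs t) * (/ 2) ^ n).
  assert (He : is_lim_seq e 0) by apply is_lim_seq_geom_half.
  assert (Hz := dist_Lim_seq_le (fun n => fst (picard z0 v0 n) t) e He
    (fun k m Hkm => Rle_trans _ _ _ (gap_fst_le _ _ t) (gap_picard_le z0 v0 k m t Hkm)) n).
  assert (Hv := dist_Lim_seq_le (fun n => snd (picard z0 v0 n) t) e He
    (fun k m Hkm => Rle_trans _ _ _ (gap_snd_le _ _ t) (gap_picard_le z0 v0 k m t Hkm)) n).
  unfold gap, picard_lim; simpl. unfold e in *. lra.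
Qed.

Lemma continuous_picard_lim z0 v0 : continuous_pair (picard_lim z0 v0).
Proof.
  intros t. set (c := 4 * picard_scale z0 v0 * exp (growth_rate * (Rabs t + 1))).
  assert (Hc : forall x n, Rabs (x - t) <= 1 ->
                gap (picard_lim z0 v0) (picard z0 v0 n) x <= c * (/ 2) ^ n).
  { intros x n Hx. eapply Rle_trans; [apply gap_picard_lim|].
    apply Rmult_le_compat_r; [apply pow_le; lra|].
    apply Rmult_le_compat_l; [generalize (picard_scale_nonneg z0 v0); lra|].
    apply exp_le_mono, Rmult_le_compat_l; [left; apply growth_rate_pos|].
    generalize (Rabs_triang_inv x t). lra. }
  split; apply continuous_of_uniform_approx; intros eps Heps;
    destruct (exists_geom_half_le c eps Heps) as [n Hn];
    destruct (continuous_picard z0 v0 n t) as [Pz Pv].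
  - exists (fst (picard z0 v0 n)). split; [exact Pz|]. intros x Hx.
    eapply Rle_trans; [apply gap_fst_le|]. eapply Rle_trans; [apply Hc, Hx|exact Hn].
  - exists (snd (picard z0 v0 n)). split; [exact Pv|]. intros x Hx.
    eapply Rle_trans; [apply gap_snd_le|]. eapply Rle_trans; [apply Hc, Hx|exact Hn].
Qed.

Lemma picard_lim_fixpoint z0 v0 t :
  gap (picard_lim z0 v0) (picard_step z0 v0 (picard_lim z0 v0)) t = 0.
Proof.
  apply Rle_antisym; [|apply gap_nonneg].
  set (K := 4 * picard_scale z0 v0).
  assert (HK : 0 <= K) by (generalize (picard_scale_nonneg z0 v0); unfold K; lra).
  apply (le_of_le_plus_geom_half _ 0 (2 * K * exp (growth_rate * Rabs t))). intros n.
  eapply Rle_trans; [apply (gap_triangle _ (picard z0 v0 (S n)))|].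
  assert (H1 := gap_picard_lim z0 v0 (S n) t).
  assert (H2 : gap (picard_step z0 v0 (picard z0 v0 n)) (picard_step z0 v0 (picard_lim z0 v0)) t
               <= K * (/ 2) ^ n * (exp (growth_rate * Rabs t) - 1) / 2).
  { eapply Rle_trans.
    - apply (gap_picard_step _ _ _ _ _ _ (K * (/ 2) ^ n));
        [apply Rmult_le_pos; [exact HK|apply pow_le; lra]
        |apply continuous_picard|apply continuous_picard_lim|].
      intros s. rewrite gap_sym. eapply Rle_trans; [apply gap_picard_lim|]. unfold K. lra.
    - rewrite !Rminus_diag, Rabs_R0. lra. }
  change (picard z0 v0 (S n)) with (picard_step z0 v0 (picard z0 v0 n)) in H1 |- *.
  assert (He := exp_growth_ge1 t). assert (0 <= (/ 2) ^ n) by (apply pow_le; lra).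
  simpl pow in H1. fold K in H1. assert (0 <= K * (/ 2) ^ n) by (apply Rmult_le_pos; assumption).
  nra.
Qed.

Lemma picard_lim_integral z0 v0 t :
  fst (picard_lim z0 v0) t = z0 + RInt (snd (picard_lim z0 v0)) 0 t /\
  snd (picard_lim z0 v0) t
  = v0 + RInt (fun s => F (fst (picard_lim z0 v0) s) (snd (picard_lim z0 v0) s)) 0 t.
Proof.
  assert (H := picard_lim_fixpoint z0 v0 t).
  assert (H1 := gap_fst_le (picard_lim z0 v0) (picard_step z0 v0 (picard_lim z0 v0)) t).
  assert (H2 := gap_snd_le (picard_lim z0 v0) (picard_step z0 v0 (picard_lim z0 v0)) t).
  rewrite H in H1, H2. unfold picard_step in H1, H2; cbn [fst snd] in H1, H2.
  split; apply Rminus_diag_uniq, Rabs_eq_0, Rle_antisym; (assumption || apply Rabs_pos).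
Qed.

Lemma picard_lim_derive z0 v0 t :
  is_derive (fst (picard_lim z0 v0)) t (snd (picard_lim z0 v0) t) /\
  is_derive (snd (picard_lim z0 v0)) t (F (fst (picard_lim z0 v0) t) (snd (picard_lim z0 v0) t)).
Proof.
  assert (Hc := continuous_picard_lim z0 v0).
  split.
  - apply (is_derive_ext (fun t => z0 + RInt (snd (picard_lim z0 v0)) 0 t)).
    + intros s. symmetry. apply picard_lim_integral.
    + apply is_derive_RInt_cont. intros s. apply Hc.
  - apply (is_derive_ext
      (fun t => v0 + RInt (fun s => F (fst (picard_lim z0 v0) s) (snd (picard_lim z0 v0) s)) 0 t)).
    + intros s. symmetry. apply picard_lim_integral.
    + apply (is_derive_RInt_cont
        (fun s => F (fst (picard_lim z0 v0) s) (snd (picard_lim z0 v0) s))).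
      intros s. apply continuous_F_comp; apply Hc.
Qed.

Lemma picard_lim_init z0 v0 : fst (picard_lim z0 v0) 0 = z0 /\ snd (picard_lim z0 v0) 0 = v0.
Proof.
  destruct (picard_lim_integral z0 v0 0) as [-> ->]. rewrite !RInt_point. split; apply Rplus_0_r.
Qed.

Lemma gap_picard_lim_data z0 v0 z1 v1 t :
  gap (picard_lim z0 v0) (picard_lim z1 v1) t
  <= (Rabs (z0 - z1) + Rabs (v0 - v1)) * exp (growth_rate * Rabs t).
Proof.
  apply (le_of_le_plus_geom_half _ _
    (4 * (picard_scale z0 v0 + picard_scale z1 v1) * exp (growth_rate * Rabs t))). intros n.
  eapply Rle_trans; [apply (gap_triangle _ (picard z0 v0 n))|].
  eapply Rle_trans; [apply Rplus_le_compat_l, (gap_triangle _ (picard z1 v1 n))|].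
  assert (H1 := gap_picard_lim z0 v0 n t). assert (H2 := gap_picard_lim z1 v1 n t).
  rewrite gap_sym in H2. assert (H3 := gap_picard_data z0 v0 z1 v1 n t). lra.
Qed.

End Picard.

(** * The truncated equation and shooting *)

Definition hits_pos_while_pos (a b : R -> R) : Prop :=
  exists t, 0 <= t /\ 0 < a t /\ forall u, 0 <= u <= t -> 0 < b u.

Lemma hits_pos_while_pos_excl (a b : R -> R) :
  hits_pos_while_pos a b -> hits_pos_while_pos (fun u => - b u) (fun u => - a u) -> False.
Proof.
  intros [t1 [H1 [H2 H3]]] [t2 [H4 [H5 H6]]].
  destruct (Rle_or_lt t1 t2) as [H|H];
    [specialize (H6 t1 ltac:(lra))|specialize (H3 t2 ltac:(lra))]; lra.
Qed.

Lemma hits_pos_while_pos_open (a b : R -> R -> R) r s : 0 <= r ->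
  (forall t, continuous (b s) t) ->
  (forall s' u, Rabs (a s' u - a s u) <= Rabs (s' - s) * exp (r * Rabs u)) ->
  (forall s' u, Rabs (b s' u - b s u) <= Rabs (s' - s) * exp (r * Rabs u)) ->
  hits_pos_while_pos (a s) (b s) ->
  exists eta, 0 < eta /\ forall s', Rabs (s' - s) < eta -> hits_pos_while_pos (a s') (b s').
Proof.
  intros Hr Hb Hda Hdb [t [Ht [Hat Hbt]]].
  destruct (continuity_ab_min (b s) 0 t Ht) as [mx [Hmx Hmx0]].
  { intros c _. apply continuity_pt_filterlim, Hb. }
  set (m := Rmin (b s mx) (a s t)).
  assert (Hm : 0 < m) by (apply Rmin_pos; [apply Hbt, Hmx0|exact Hat]).
  assert (He := exp_pos (r * t)).
  exists (m / (2 * exp (r * t))). split; [apply Rdiv_lt_0_compat; lra|].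
  intros s' Hs'.
  assert (Hsmall : forall u, 0 <= u <= t -> Rabs (s' - s) * exp (r * Rabs u) < m / 2).
  { intros u Hu. apply Rle_lt_trans with (Rabs (s' - s) * exp (r * t)).
    - apply Rmult_le_compat_l; [apply Rabs_pos|]. apply exp_le_mono, Rmult_le_compat_l; [lra|].
      rewrite Rabs_pos_eq; lra.
    - apply (Rmult_lt_compat_r (exp (r * t))) in Hs'; [|exact He].
      replace (m / (2 * exp (r * t)) * exp (r * t)) with (m / 2) in Hs' by (field; lra).
      exact Hs'. }
  exists t. split; [exact Ht|split].
  - assert (H := Hda s' t). assert (Hmt : m <= a s t) by apply Rmin_r.
    specialize (Hsmall t ltac:(lra)). apply Rabs_le_between in H. lra.
  - intros u Hu. assert (H := Hdb s' u). assert (Hmb : m <= b s mx) by apply Rmin_l.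
    specialize (Hsmall u Hu). specialize (Hmx u Hu). apply Rabs_le_between in H. lra.
Qed.

Lemma exists_outside_disjoint_open (U W : R -> Prop) S : 0 < S -> U 0 -> ~ U S ->
  (forall s, U s -> exists eta, 0 < eta /\ forall s', Rabs (s' - s) < eta -> U s') ->
  (forall s, W s -> exists eta, 0 < eta /\ forall s', Rabs (s' - s) < eta -> W s') ->
  (forall s, U s -> W s -> False) ->
  exists s, 0 < s /\ ~ U s /\ ~ W s.
Proof.
  intros HS HU0 HUS HUo HWo Hdisj.
  set (A := fun c => 0 <= c <= S /\ forall r, 0 <= r <= c -> U r).
  destruct (completeness A) as [c [Hub Hlub]].
  { exists S. intros x [Hx _]. lra. }
  { exists 0. split; [lra|]. intros r Hr. replace r with 0 by lra. exact HU0. }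
  assert (HcS : c <= S) by (apply Hlub; intros x [Hx _]; lra).
  assert (Hbelow : forall r, 0 <= r < c -> U r).
  { intros r Hr. apply NNPP. intros HUr. enough (c <= r) by lra.
    apply Hlub. intros e [He1 He2]. destruct (Rle_or_lt e r) as [|Hre]; [assumption|].
    exfalso. apply HUr, He2. lra. }
  assert (Hc0 : 0 < c).
  { destruct (HUo 0 HU0) as [eta [Heta Hnear]].
    assert (HA : A (Rmin (eta / 2) S)).
    { assert (Rmin (eta / 2) S <= eta / 2) by apply Rmin_l.
      split; [split; [apply Rmin_glb; lra|apply Rmin_r]|].
      intros r Hr. apply Hnear. rewrite Rminus_0_r, Rabs_pos_eq; lra. }
    specialize (Hub _ HA). assert (0 < Rmin (eta / 2) S) by (apply Rmin_pos; lra). lra. }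
  exists c. split; [exact Hc0|split].
  - intros HUc. destruct (Rle_lt_or_eq_dec c S HcS) as [Hlt|Heq]; [|subst; contradiction].
    destruct (HUo c HUc) as [eta [Heta Hnear]].
    assert (HA : A (Rmin (c + eta / 2) S)).
    { assert (Rmin (c + eta / 2) S <= c + eta / 2) by apply Rmin_l.
      split; [split; [apply Rmin_glb; lra|apply Rmin_r]|].
      intros r Hr. destruct (Rlt_or_le r c); [apply Hbelow; lra|].
      apply Hnear. rewrite Rabs_pos_eq; lra. }
    specialize (Hub _ HA). unfold Rmin in Hub. destruct (Rle_dec (c + eta / 2) S); lra.
  - intros HWc. destruct (HWo c HWc) as [eta [Heta Hnear]].
    set (r := Rmax 0 (c - eta / 2)).
    assert (Hr : 0 <= r < c) by (unfold r, Rmax; destruct (Rle_dec 0 (c - eta / 2)); lra).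
    apply (Hdisj r); [apply Hbelow, Hr|apply Hnear].
    unfold r, Rmax; destruct (Rle_dec 0 (c - eta / 2)); rewrite Rabs_left; lra.
Qed.

Definition clip (z : R) : R := Rmax (-6) (Rmin z 6).

Lemma clip_lipschitz a b : Rabs (clip a - clip b) <= Rabs (a - b).
Proof.
  assert (H1 := Rle_abs (a - b)). assert (H2 := Rle_abs (b - a)). rewrite Rabs_minus_sym in H2.
  apply Rabs_le. unfold clip, Rmax, Rmin.
  destruct (Rle_dec a 6), (Rle_dec b 6);
    repeat match goal with |- context [Rle_dec ?x ?y] => destruct (Rle_dec x y) end;
    split; lra.
Qed.

Lemma clip_bound a : Rabs (clip a) <= 6.
Proof.
  apply Rabs_le. unfold clip. split; [apply Rmax_l|apply Rmax_lub; [lra|apply Rmin_r]].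
Qed.

Lemma clip_id a : Rabs a <= 6 -> clip a = a.
Proof.
  intros Ha. apply Rabs_le_between in Ha. unfold clip.
  rewrite Rmin_left, Rmax_right; lra.
Qed.

Section Truncated.

Variable n : R.
Hypothesis n_ge5 : 5 <= n.

(* The equation reads [z'' = trunc_field z z'] wherever [|z| <= 6]; freezing the quadratic term
   outside [[-6, 6]] makes the field globally Lipschitz. *)
Definition trunc_field (z v : R) : R := (n - 4) * v + (2 * n - 4) * z - (n - 1) / 2 * clip z ^ 2.

Definition trunc_lip : R := (n - 4) + (2 * n - 4) + 6 * (n - 1) + 1.

Lemma trunc_lip_ge1 : 1 <= trunc_lip.
Proof. unfold trunc_lip; lra. Qed.

Lemma trunc_field_lipschitz a b c d :
  Rabs (trunc_field a b - trunc_field c d) <= trunc_lip * (Rabs (a - c) + Rabs (b - d)).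
Proof.
  assert (Hsq : Rabs (clip a ^ 2 - clip c ^ 2) <= 12 * Rabs (a - c)).
  { replace (clip a ^ 2 - clip c ^ 2) with ((clip a - clip c) * (clip a + clip c)) by ring.
    rewrite Rabs_mult.
    assert (Hs : Rabs (clip a + clip c) <= 12).
    { eapply Rle_trans; [apply Rabs_triang|]. generalize (clip_bound a) (clip_bound c). lra. }
    generalize (clip_lipschitz a c) (Rabs_pos (clip a - clip c)) (Rabs_pos (clip a + clip c)).
    nra. }
  unfold trunc_field, trunc_lip.
  replace ((n - 4) * b + (2 * n - 4) * a - (n - 1) / 2 * clip a ^ 2 -
           ((n - 4) * d + (2 * n - 4) * c - (n - 1) / 2 * clip c ^ 2))
    with ((n - 4) * (b - d) + (2 * n - 4) * (a - c) - (n - 1) / 2 * (clip a ^ 2 - clip c ^ 2))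
    by ring.
  eapply Rle_trans; [apply Rabs_triang|]. eapply Rle_trans; [apply Rplus_le_compat_r, Rabs_triang|].
  rewrite Rabs_Ropp, !Rabs_mult, (Rabs_pos_eq (n - 4)), (Rabs_pos_eq (2 * n - 4)),
    (Rabs_pos_eq ((n - 1) / 2)) by lra.
  generalize (Rabs_pos (a - c)) (Rabs_pos (b - d)). nra.
Qed.

Lemma trunc_field_pos_at_rest z : 0 < z <= 1 -> 0 < trunc_field z 0.
Proof.
  intros Hz. unfold trunc_field. rewrite clip_id by (rewrite Rabs_pos_eq; lra).
  replace ((n - 4) * 0 + (2 * n - 4) * z - (n - 1) / 2 * z ^ 2) with
    (z * ((2 * n - 4) - (n - 1) / 2 * z)) by ring.
  apply Rmult_lt_0_compat; nra.
Qed.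

Definition shot (s : R) : (R -> R) * (R -> R) := picard_lim trunc_field 1 (- s).
Definition shot_z (s : R) : R -> R := fst (shot s).
Definition shot_v (s : R) : R -> R := snd (shot s).

Lemma shot_derive s t :
  is_derive (shot_z s) t (shot_v s t) /\
  is_derive (shot_v s) t (trunc_field (shot_z s t) (shot_v s t)).
Proof. exact (picard_lim_derive _ _ trunc_lip_ge1 trunc_field_lipschitz 1 (- s) t). Qed.

Lemma shot_z_derive s t : is_derive (shot_z s) t (shot_v s t).
Proof. apply shot_derive. Qed.

Lemma shot_v_derive s t : is_derive (shot_v s) t (trunc_field (shot_z s t) (shot_v s t)).
Proof. apply shot_derive. Qed.

Lemma Derive_shot_z s t : Derive (shot_z s) t = shot_v s t.
Proof. apply is_derive_unique, shot_z_derive. Qed.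

Lemma Derive_shot_v s t : Derive (shot_v s) t = trunc_field (shot_z s t) (shot_v s t).
Proof. apply is_derive_unique, shot_v_derive. Qed.

Lemma shot_z_continuous s t : continuous (shot_z s) t.
Proof. exact (proj1 (continuous_picard_lim _ _ trunc_lip_ge1 trunc_field_lipschitz 1 (- s) t)). Qed.

Lemma shot_v_continuous s t : continuous (shot_v s) t.
Proof. exact (proj2 (continuous_picard_lim _ _ trunc_lip_ge1 trunc_field_lipschitz 1 (- s) t)). Qed.

Lemma trunc_field_shot_continuous s t :
  continuous (fun u => trunc_field (shot_z s u) (shot_v s u)) t.
Proof.
  apply (continuous_F_comp _ _ trunc_lip_ge1 trunc_field_lipschitz);
    [apply shot_z_continuous|apply shot_v_continuous].
Qed.

Lemma shot_init s : shot_z s 0 = 1 /\ shot_v s 0 = - s.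
Proof. exact (picard_lim_init _ _ trunc_lip_ge1 trunc_field_lipschitz 1 (- s)). Qed.

Definition shot_rate : R := growth_rate trunc_lip.

Lemma shot_rate_pos : 0 < shot_rate.
Proof. apply growth_rate_pos, trunc_lip_ge1. Qed.

Lemma shot_dependence s s' t :
  Rabs (shot_z s' t - shot_z s t) <= Rabs (s' - s) * exp (shot_rate * Rabs t) /\
  Rabs (shot_v s' t - shot_v s t) <= Rabs (s' - s) * exp (shot_rate * Rabs t).
Proof.
  assert (H := gap_picard_lim_data _ _ trunc_lip_ge1 trunc_field_lipschitz 1 (- s') 1 (- s) t).
  replace (Rabs (1 - 1) + Rabs (- s' - - s)) with (Rabs (s' - s)) in H
    by (rewrite Rminus_diag, Rabs_R0, Rplus_0_l, <- Rabs_Ropp; f_equal; ring).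
  split; (eapply Rle_trans; [|exact H]);
    [apply (gap_fst_le (shot s') (shot s))|apply (gap_snd_le (shot s') (shot s))].
Qed.

Definition potential (z : R) : R := - (2 * n - 4) * z ^ 2 / 2 + (n - 1) / 6 * z ^ 3.

Definition energy (s t : R) : R := shot_v s t ^ 2 / 2 + potential (shot_z s t).

Lemma potential_neg z : 0 < z <= 1 -> potential z < 0.
Proof.
  intros Hz. unfold potential.
  replace (- (2 * n - 4) * z ^ 2 / 2 + (n - 1) / 6 * z ^ 3) with
    (z ^ 2 * (- (n - 2) + (n - 1) / 6 * z)) by field.
  assert (0 < z ^ 2) by (apply pow_lt; lra).
  assert (- (n - 2) + (n - 1) / 6 * z < 0) by nra. nra.
Qed.

Lemma energy_derive s t : Rabs (shot_z s t) <= 6 ->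
  is_derive (energy s) t ((n - 4) * shot_v s t ^ 2).
Proof.
  intros Hb. destruct (shot_derive s t) as [Hz Hv].
  unfold energy, potential. auto_derive.
  - repeat split; eexists; eauto.
  - rewrite Derive_shot_z, Derive_shot_v. unfold trunc_field. rewrite clip_id by exact Hb. field.
Qed.

Lemma energy_monotone s a b : a <= b -> (forall u, a <= u <= b -> Rabs (shot_z s u) <= 6) ->
  energy s a <= energy s b.
Proof.
  intros Hab Hb. apply (monotone_of_derive_nonneg _ (fun u => (n - 4) * shot_v s u ^ 2) a b Hab).
  - intros x Hx. apply energy_derive, Hb, Hx.
  - intros x _. apply Rmult_le_pos; [lra|apply pow2_ge_0].
Qed.

Lemma shot_z_nonincreasing s a b : a <= b -> (forall u, a <= u <= b -> shot_v s u <= 0) ->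
  shot_z s b <= shot_z s a.
Proof.
  intros Hab Hv. assert (H := MVT_upper_bound (shot_z s) (shot_v s) a b 0 Hab).
  enough (shot_z s b - shot_z s a <= 0 * (b - a)) by lra.
  apply H; [intros x _; apply shot_z_derive|exact Hv].
Qed.

Definition turns_up (s : R) : Prop := hits_pos_while_pos (shot_v s) (shot_z s).

Definition crosses_zero (s : R) : Prop :=
  hits_pos_while_pos (fun u => - shot_z s u) (fun u => - shot_v s u).

Lemma turns_up_open s : turns_up s ->
  exists eta, 0 < eta /\ forall s', Rabs (s' - s) < eta -> turns_up s'.
Proof.
  apply (hits_pos_while_pos_open shot_v shot_z shot_rate);
    [left; apply shot_rate_pos|apply shot_z_continuous| |];
    intros s' u; apply shot_dependence.
Qed.

Lemma crosses_zero_open s : crosses_zero s ->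
  exists eta, 0 < eta /\ forall s', Rabs (s' - s) < eta -> crosses_zero s'.
Proof.
  apply (hits_pos_while_pos_open (fun s u => - shot_z s u) (fun s u => - shot_v s u) shot_rate).
  - left; apply shot_rate_pos.
  - intros t. apply (continuous_opp (shot_v s)), shot_v_continuous.
  - intros s' u. replace (- shot_z s' u - - shot_z s u) with (- (shot_z s' u - shot_z s u)) by ring.
    rewrite Rabs_Ropp. apply shot_dependence.
  - intros s' u. replace (- shot_v s' u - - shot_v s u) with (- (shot_v s' u - shot_v s u)) by ring.
    rewrite Rabs_Ropp. apply shot_dependence.
Qed.

Lemma turns_up_0 : turns_up 0.
Proof.
  destruct (shot_init 0) as [Hz0 Hv0].
  destruct (continuous_pos_near (shot_z 0) 0 (shot_z_continuous 0 0)) as [d [Hd Hnear]];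
    [lra|].
  destruct (exists_right_increase (shot_v 0) (fun u => trunc_field (shot_z 0 u) (shot_v 0 u))
              0 d Hd)
    as [u [Hu Hvu]].
  - intros x. apply shot_v_derive.
  - apply trunc_field_shot_continuous.
  - rewrite Hz0, Hv0, Ropp_0. apply trunc_field_pos_at_rest. lra.
  - exists u. split; [lra|split; [rewrite Hv0 in Hvu; lra|]].
    intros w Hw. assert (Hw' : Rabs (w - 0) < d) by (rewrite Rminus_0_r, Rabs_pos_eq; lra).
    specialize (Hnear w Hw'). lra.
Qed.

Lemma not_turns_up_n : ~ turns_up n.
Proof.
  intros [t [Ht [Hvt Hz]]].
  destruct (shot_init n) as [Hz0 Hv0].
  destruct (exists_first_zero (shot_v n) 0 t Ht (shot_v_continuous n)) as [c [Hc [Hvc Hneg]]];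
    [lra|lra|].
  assert (Hzc : forall u, 0 <= u <= c -> 0 < shot_z n u <= 1).
  { intros u Hu. split; [apply Hz; lra|]. rewrite <- Hz0.
    apply shot_z_nonincreasing; [lra|]. intros w Hw.
    destruct (Rlt_or_le w c); [left; apply Hneg; lra|replace w with c by lra; lra]. }
  assert (HE : energy n 0 <= energy n c).
  { apply energy_monotone; [lra|]. intros u Hu.
    destruct (Hzc u Hu). rewrite Rabs_pos_eq; lra. }
  unfold energy in HE. rewrite Hz0, Hv0, Hvc in HE.
  assert (Hp := potential_neg (shot_z n c) (Hzc c ltac:(lra))).
  unfold potential at 1 in HE. nra.
Qed.

Lemma exists_critical_shot : exists s, 0 < s /\ ~ turns_up s /\ ~ crosses_zero s.
Proof.
  apply (exists_outside_disjoint_open turns_up crosses_zero n);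
    [lra|exact turns_up_0|exact not_turns_up_n|exact turns_up_open|exact crosses_zero_open|].
  intros s. apply hits_pos_while_pos_excl.
Qed.

Section Critical.

Variable s : R.
Hypothesis s_pos : 0 < s.
Hypothesis no_turn : ~ turns_up s.
Hypothesis no_cross : ~ crosses_zero s.

Local Notation zs := (shot_z s).
Local Notation vs := (shot_v s).

Lemma zs_init : zs 0 = 1.
Proof. apply shot_init. Qed.

Lemma vs_init : vs 0 = - s.
Proof. apply shot_init. Qed.

Lemma vs_neg_before_first_zero c : (forall u, 0 <= u < c -> 0 < zs u) ->
  forall u, 0 <= u < c -> vs u < 0.
Proof.
  intros Hpos.
  assert (Hle : forall u, 0 <= u < c -> vs u <= 0).
  { intros u Hu. apply Rnot_lt_le. intros Hvu. apply no_turn.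
    exists u. split; [lra|split; [exact Hvu|]]. intros w Hw. apply Hpos. lra. }
  intros u Hu. destruct (Hle u Hu) as [|Hvu]; [assumption|exfalso].
  assert (Hzu : 0 < zs u <= 1).
  { split; [apply Hpos, Hu|]. rewrite <- zs_init.
    apply shot_z_nonincreasing; [lra|]. intros w Hw. apply Hle. lra. }
  destruct (exists_right_increase vs (fun w => trunc_field (zs w) (vs w)) u (c - u))
    as [u' [Hu' Hvu']]; [lra|apply shot_v_derive|apply trunc_field_shot_continuous| |].
  - rewrite Hvu. apply trunc_field_pos_at_rest; [exact Hzu].
  - specialize (Hle u' ltac:(lra)). lra.
Qed.

Lemma crosses_zero_of_transversal c : 0 <= c -> zs c = 0 -> vs c < 0 ->
  (forall u, 0 <= u < c -> vs u < 0) -> crosses_zero s.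
Proof.
  intros Hc Hzc Hvc Hneg.
  destruct (continuous_neg_near vs c (shot_v_continuous s c) Hvc) as [d [Hd Hnear]].
  assert (Hright : forall u, c <= u <= c + d / 2 -> vs u < vs c / 2).
  { intros u Hu. apply Hnear. rewrite Rabs_pos_eq; lra. }
  exists (c + d / 2). split; [lra|split].
  - assert (H : zs (c + d / 2) - zs c <= vs c / 2 * (c + d / 2 - c)).
    { apply (MVT_upper_bound zs vs); [lra|intros; apply shot_z_derive|].
      intros x Hx. left. apply Hright, Hx. }
    assert (vs c / 2 * (c + d / 2 - c) < 0) by (apply Rmult_neg_pos; lra). lra.
  - intros u Hu.
    destruct (Rlt_or_le u c); [specialize (Hneg u ltac:(lra))|specialize (Hright u ltac:(lra))];
    lra.
Qed.

(* A tangential zero would have zero energy; since the energy grows, [v >= - 2 n z] before it,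
   so [z e^(2 n t)] cannot decrease from [1] to [0]. *)
Lemma first_zero_not_tangent c : 0 < c -> zs c = 0 -> vs c = 0 ->
  (forall u, 0 <= u < c -> 0 < zs u) -> (forall u, 0 <= u < c -> vs u < 0) -> False.
Proof.
  intros Hc Hzc Hvc Hpos Hneg.
  assert (Hzr : forall u, 0 <= u <= c -> 0 <= zs u <= 1).
  { intros u Hu. split.
    - destruct (Rlt_or_le u c); [left; apply Hpos; lra|replace u with c by lra; lra].
    - rewrite <- zs_init. apply shot_z_nonincreasing; [lra|]. intros w Hw.
      destruct (Rlt_or_le w c); [left; apply Hneg; lra|replace w with c by lra; lra]. }
  assert (HE : forall u, 0 <= u <= c -> energy s u <= 0).
  { assert (Ec : energy s c = 0) by (unfold energy, potential; rewrite Hzc, Hvc; field).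
    intros u Hu. rewrite <- Ec. apply energy_monotone; [lra|]. intros w Hw.
    destruct (Hzr w ltac:(lra)). rewrite Rabs_pos_eq; lra. }
  assert (Hvb : forall u, 0 <= u <= c -> - (2 * n) * zs u <= vs u).
  { intros u Hu. specialize (HE u Hu). destruct (Hzr u Hu) as [Hz0 Hz1].
    unfold energy, potential in HE. apply Rnot_lt_le. intros Hlt.
    assert (0 <= zs u ^ 3) by (apply pow_le; lra).
    assert (vs u ^ 2 <= (2 * n - 4) * zs u ^ 2) by nra.
    assert (0 <= 2 * n * zs u) by nra.
    assert ((2 * n * zs u) ^ 2 < vs u ^ 2) by nra.
    assert ((2 * n - 4) * zs u ^ 2 <= (2 * n * zs u) ^ 2) by (assert (0 <= zs u ^ 2) by nra; nra).
    lra. }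
  assert (HG : zs 0 * exp (2 * n * 0) <= zs c * exp (2 * n * c)).
  { apply (monotone_of_derive_nonneg (fun u => zs u * exp (2 * n * u))
      (fun u => (vs u + 2 * n * zs u) * exp (2 * n * u))); [lra| |].
    - intros x _. auto_derive; [exists (vs x); apply shot_z_derive|].
      rewrite Derive_shot_z. ring.
    - intros x Hx. specialize (Hvb x Hx). apply Rmult_le_pos; [lra|left; apply exp_pos]. }
  rewrite Hzc, zs_init, Rmult_0_r, exp_0 in HG. lra.
Qed.

Lemma zs_pos t : 0 <= t -> 0 < zs t.
Proof.
  intros Ht. apply Rnot_le_lt. intros Hle.
  destruct (exists_first_zero (fun u => - zs u) 0 t Ht) as [c [Hc [Hzc Hbelow]]].
  - intros x. apply (continuous_opp zs), shot_z_continuous.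
  - rewrite zs_init. lra.
  - lra.
  - assert (Hzc' : zs c = 0) by lra.
    assert (Hpos : forall u, 0 <= u < c -> 0 < zs u)
      by (intros u Hu; specialize (Hbelow u Hu); lra).
    assert (Hneg := vs_neg_before_first_zero c Hpos).
    assert (Hvc := nonpos_of_neg_on_left vs 0 c ltac:(lra) (shot_v_continuous s c) Hneg).
    destruct Hvc as [Hvc|Hvc].
    + apply no_cross, (crosses_zero_of_transversal c); auto; lra.
    + apply (first_zero_not_tangent c); auto; lra.
Qed.

Lemma vs_nonpos t : 0 <= t -> vs t <= 0.
Proof.
  intros Ht. apply Rnot_lt_le. intros Hvt. apply no_turn.
  exists t. split; [exact Ht|split; [exact Hvt|]]. intros u Hu. apply zs_pos. lra.
Qed.

Lemma zs_le1 t : 0 <= t -> zs t <= 1.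
Proof.
  intros Ht. rewrite <- zs_init. apply shot_z_nonincreasing; [exact Ht|].
  intros u Hu. apply vs_nonpos. lra.
Qed.

Lemma zs_abs_le6 t : 0 <= t -> Rabs (zs t) <= 6.
Proof.
  intros Ht. generalize (zs_pos t Ht) (zs_le1 t Ht). intros. rewrite Rabs_pos_eq; lra.
Qed.

(* [w = v - (n - 5/2) z] satisfies [w' + 3/2 w = z ((n/2 - 1/4) - (n - 1)/2 z)], which is
   nonnegative while [0 < z <= 1]. *)
Lemma vs_lower_bound t : 0 <= t ->
  - (s + (n - 5/2)) * exp (- (3/2) * t) <= vs t - (n - 5/2) * zs t.
Proof.
  intros Ht.
  assert (H : exp (3/2 * 0) * (vs 0 - (n - 5/2) * zs 0)
              <= exp (3/2 * t) * (vs t - (n - 5/2) * zs t)).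
  { apply (monotone_of_derive_nonneg (fun u => exp (3/2 * u) * (vs u - (n - 5/2) * zs u))
      (fun u => exp (3/2 * u) * (3/2 * (vs u - (n - 5/2) * zs u)
                                 + (trunc_field (zs u) (vs u) - (n - 5/2) * vs u))) 0 t Ht).
    - intros x _. auto_derive.
      + split; [exists (trunc_field (zs x) (vs x)); apply shot_v_derive|].
        split; [exists (vs x); apply shot_z_derive|exact I].
      + rewrite Derive_shot_z, Derive_shot_v. ring.
    - intros x Hx. apply Rmult_le_pos; [left; apply exp_pos|].
      unfold trunc_field. rewrite clip_id by (apply zs_abs_le6; lra).
      replace (3/2 * (vs x - (n - 5/2) * zs x)
               + ((n - 4) * vs x + (2 * n - 4) * zs x - (n - 1) / 2 * zs x ^ 2 - (n - 5/2) * vs x))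
        with (zs x * ((n / 2 - 1/4) - (n - 1) / 2 * zs x)) by field.
      generalize (zs_pos x (proj1 Hx)) (zs_le1 x (proj1 Hx)). intros. apply Rmult_le_pos; nra. }
  rewrite Rmult_0_r, exp_0, Rmult_1_l, zs_init, vs_init in H.
  replace (- (3/2) * t) with (- (3/2 * t)) by ring.
  assert (Hinv := exp_mul_exp_neg (3/2 * t)). assert (He := exp_pos (- (3/2 * t))).
  replace (vs t - (n - 5/2) * zs t)
    with (exp (- (3/2 * t)) * (exp (3/2 * t) * (vs t - (n - 5/2) * zs t)))
    by (rewrite <- Rmult_assoc, (Rmult_comm (exp (- _))), Hinv; ring).
  nra.
Qed.

(* With [C = (s + n - 5/2) / (n - 1)], [y = z - C e^(-3t/2)] satisfies [y' >= (n - 5/2) y];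
   so [e^(-(n - 5/2) t) y] is nondecreasing, yet at most [e^(-(n - 5/2) t)] since [z <= 1]. *)
Lemma zs_decay t : 0 <= t -> zs t <= (s + (n - 5/2)) / (n - 1) * exp (- (3/2) * t).
Proof.
  intros Ht. set (C := (s + (n - 5/2)) / (n - 1)).
  assert (HC : 0 <= C) by (apply Rmult_le_pos; [lra|left; apply Rinv_0_lt_compat; lra]).
  set (y := fun u => exp (- (n - 5/2) * u) * (zs u - C * exp (- (3/2) * u))).
  assert (Hmono : forall T, t <= T -> y t <= y T).
  { intros T HT. apply (monotone_of_derive_nonneg y (fun u => exp (- (n - 5/2) * u)
      * ((vs u - (n - 5/2) * zs u) + (s + (n - 5/2)) * exp (- (3/2) * u))) t T HT).
    - intros x _. unfold y. auto_derive; [exists (vs x); apply shot_z_derive|].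
      rewrite Derive_shot_z. unfold C. field. lra.
    - intros x Hx. apply Rmult_le_pos; [left; apply exp_pos|].
      generalize (vs_lower_bound x ltac:(lra)). lra. }
  assert (Hy : y t <= 0).
  { apply (nonpos_of_exp_decay_bound (y t) 1 (n - 5/2) t); [lra|]. intros T HT.
    eapply Rle_trans; [apply Hmono, HT|]. unfold y.
    assert (0 <= C * exp (- (3/2) * T)) by (apply Rmult_le_pos; [exact HC|left; apply exp_pos]).
    assert (zs T <= 1) by (apply zs_le1; lra). assert (He := exp_pos (- (n - 5/2) * T)). nra. }
  unfold y in Hy. assert (He := exp_pos (- (n - 5/2) * t)). fold C. nra.
Qed.

Lemma vs_sq_decay t : 0 <= t -> vs t ^ 2 <= (s + (n - 5/2)) ^ 2 * exp (- (3/2) * t).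
Proof.
  intros Ht. assert (H := vs_lower_bound t Ht).
  assert (Hz := zs_pos t Ht). assert (Hv := vs_nonpos t Ht).
  assert (He1 : exp (- (3/2) * t) <= 1) by (rewrite <- exp_0; apply exp_le_mono; lra).
  assert (He0 := exp_pos (- (3/2) * t)).
  assert (Hlow : - ((s + (n - 5/2)) * exp (- (3/2) * t)) <= vs t).
  { assert (0 <= (n - 5/2) * zs t) by (apply Rmult_le_pos; lra). lra. }
  assert (0 <= (s + (n - 5/2)) * exp (- (3/2) * t)) by (apply Rmult_le_pos; lra).
  assert (vs t ^ 2 <= ((s + (n - 5/2)) * exp (- (3/2) * t)) ^ 2) by nra.
  assert (((s + (n - 5/2)) * exp (- (3/2) * t)) ^ 2 <= (s + (n - 5/2)) ^ 2 * exp (- (3/2) * t)).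
  { assert (0 <= (s + (n - 5/2)) ^ 2) by apply pow2_ge_0. nra. }
  lra.
Qed.

Lemma energy_at_0_nonpos : energy s 0 <= 0.
Proof.
  set (k := s + (n - 5/2)).
  apply (nonpos_of_exp_decay_bound _ (k ^ 2 / 2 + (n - 1) / 6 * (k / (n - 1))) (3/2) 0); [lra|].
  intros T HT.
  eapply Rle_trans.
  { apply energy_monotone; [exact HT|]. intros u Hu. apply zs_abs_le6. lra. }
  unfold energy, potential.
  assert (H1 := zs_pos T HT). assert (H2 := zs_le1 T HT).
  assert (H3 := zs_decay T HT). assert (H4 := vs_sq_decay T HT). fold k in H3, H4.
  assert (zs T ^ 3 <= zs T) by nra.
  assert (0 <= (2 * n - 4) * zs T ^ 2) by (apply Rmult_le_pos; [lra|apply pow2_ge_0]).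
  assert ((n - 1) / 6 * zs T ^ 3 <= (n - 1) / 6 * (k / (n - 1) * exp (- (3/2) * T))).
  { apply Rmult_le_compat_l; lra. }
  replace ((k ^ 2 / 2 + (n - 1) / 6 * (k / (n - 1))) * exp (- (3/2) * T))
    with (k ^ 2 * exp (- (3/2) * T) / 2 + (n - 1) / 6 * (k / (n - 1) * exp (- (3/2) * T)))
    by (field; lra).
  lra.
Qed.

Lemma energy_neg_left u : u < 0 -> (forall x, u <= x <= 0 -> Rabs (zs x) <= 6) -> energy s u < 0.
Proof.
  intros Hu Hb.
  destruct (continuous_neg_near vs 0 (shot_v_continuous s 0)) as [d [Hd Hnear]];
    [rewrite vs_init; lra|].
  rewrite vs_init in Hnear.
  set (w := Rmax u (- d / 2)).
  assert (Hw : u <= w < 0) by (unfold w, Rmax; destruct (Rle_dec u (- d / 2)); lra).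
  assert (Hwd : - d / 2 <= w) by apply Rmax_r.
  assert (Hgain : (n - 4) * (s ^ 2 / 4) * (0 - w) <= energy s 0 - energy s w).
  { apply (MVT_lower_bound _ (fun x => (n - 4) * vs x ^ 2)); [lra| |].
    - intros x Hx. apply energy_derive; [apply Hb; lra].
    - intros x Hx. apply Rmult_le_compat_l; [lra|].
      assert (Hx' : Rabs (x - 0) < d) by (rewrite Rminus_0_r, Rabs_left1; lra).
      specialize (Hnear x Hx'). nra. }
  assert (Hmono : energy s u <= energy s w).
  { apply energy_monotone; [lra|]. intros x Hx. apply Hb. lra. }
  assert (H0 := energy_at_0_nonpos).
  assert (0 < (n - 4) * (s ^ 2 / 4) * (0 - w)).
  { apply Rmult_lt_0_compat; [apply Rmult_lt_0_compat; [lra|]|lra].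
    assert (0 < s ^ 2) by (apply pow_lt; lra). lra. }
  lra.
Qed.

(* At a first exit from [(0, 6)] backward in time, the energy would be at least
   [potential 0 = 0] or [potential 6 = 36]. *)
Lemma zs_backward_bounds t : t <= 0 -> 0 < zs t < 6.
Proof.
  intros Ht. apply NNPP. intros Hout.
  set (f := fun x => - (zs (- x) * (6 - zs (- x)))).
  assert (Hf : forall x : R, continuous f x).
  { intros x. apply (ex_derive_continuous (K := R_AbsRing) (V := R_NormedModule) f x). unfold f.
    auto_derive. repeat split; exists (vs (- x)); apply shot_z_derive. }
  destruct (exists_first_zero f 0 (- t)) as [c [Hc [Hfc Hneg]]]; [lra|exact Hf| | |].
  - unfold f. rewrite Ropp_0, zs_init. lra.
  - unfold f. rewrite Ropp_involutive.
    destruct (Rle_or_lt (zs t) 0); [nra|]. assert (6 <= zs t) by lra. nra.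
  - assert (Hin : forall u, - c < u <= 0 -> 0 < zs u < 6).
    { intros u Hu. specialize (Hneg (- u) ltac:(lra)). unfold f in Hneg.
      rewrite Ropp_involutive in Hneg. destruct (Rle_or_lt (zs u) 0); [nra|].
      destruct (Rle_or_lt 6 (zs u)); [nra|lra]. }
    assert (Hedge : zs (- c) = 0 \/ zs (- c) = 6).
    { unfold f in Hfc. destruct (Rmult_integral (zs (- c)) (6 - zs (- c))); [lra|left|right]; lra. }
    assert (Hb : forall u, - c <= u <= 0 -> Rabs (zs u) <= 6).
    { intros u Hu. destruct (Rle_lt_or_eq_dec (- c) u (proj1 Hu)) as [Hlt|Heq].
      - destruct (Hin u ltac:(lra)). rewrite Rabs_pos_eq; lra.
      - subst u. destruct Hedge as [-> | ->]; rewrite Rabs_pos_eq; lra. }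
    assert (HE := energy_neg_left (- c) ltac:(lra) Hb).
    unfold energy, potential in HE.
    assert (0 <= vs (- c) ^ 2) by apply pow2_ge_0.
    destruct Hedge as [Hz|Hz]; rewrite Hz in HE; nra.
Qed.

End Critical.

Lemma exists_decaying_orbit : exists (z v : R -> R) (C : R), 0 < C /\
  (forall t, is_derive z t (v t)) /\
  (forall t, is_derive v t ((n - 4) * v t + (2 * n - 4) * z t - (n - 1) / 2 * z t ^ 2)) /\
  (forall t, 0 < z t < 6) /\ (forall t, 0 <= t -> z t <= C * exp (- (3/2) * t)).
Proof.
  destruct exists_critical_shot as [s [Hs [Hturn Hcross]]].
  assert (Hb : forall t, 0 < shot_z s t < 6).
  { intros t. destruct (Rle_or_lt 0 t) as [Ht|Ht].
    - assert (0 < shot_z s t) by (apply zs_pos; assumption).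
      assert (shot_z s t <= 1) by (apply zs_le1; assumption). lra.
    - apply zs_backward_bounds; auto; lra. }
  exists (shot_z s), (shot_v s), ((s + (n - 5/2)) / (n - 1)).
  split; [apply Rdiv_lt_0_compat; lra|split; [apply shot_z_derive|split; [|split; [exact Hb|]]]].
  - intros t. assert (H := shot_v_derive s t). unfold trunc_field in H.
    rewrite clip_id in H by (destruct (Hb t); rewrite Rabs_pos_eq; lra). exact H.
  - intros t Ht. apply zs_decay; assumption.
Qed.

End Truncated.

(** * A continuum of positive solutions *)

Lemma is_lim_exp_neg_mul a : a < 0 -> is_lim (fun t => exp (a * t)) p_infty 0.
Proof.
  intros Ha. apply is_lim_spec. intros eps. exists (ln eps / a). intros t Ht.
  rewrite Rminus_0_r, Rabs_pos_eq by (left; apply exp_pos).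
  rewrite <- (exp_ln eps) by apply cond_pos. apply exp_increasing.
  apply (Rmult_lt_compat_l (- a)) in Ht; [|lra].
  replace (- a * (ln eps / a)) with (- ln eps) in Ht by (field; lra). lra.
Qed.

Lemma is_lim_squeeze_0 (f g : R -> R) x : Rbar_locally' x (fun t => 0 <= f t <= g t) ->
  is_lim g x 0 -> is_lim f x 0.
Proof.
  intros Hfg Hg. apply (is_lim_le_le_loc (fun _ => 0) g); [exact Hfg|apply is_lim_const|exact Hg].
Qed.

Lemma is_solution_of_orbit (N : nat) (z v : R -> R) C T0 :
  (forall t, is_derive z t (v t)) ->
  (forall t, is_derive v t
     ((INR N - 4) * v t + (2 * INR N - 4) * z t - (INR N - 1) / 2 * z t ^ 2)) ->
  (forall t, 0 < z t < 6) ->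
  (forall t, T0 <= t -> z t <= C * exp (- (3/2) * t)) ->
  is_solution N z.
Proof.
  intros Hz Hv Hb Hd. set (n := INR N).
  assert (Dz : forall t, Derive z t = v t) by (intros; apply is_derive_unique, Hz).
  assert (Dv : forall t,
    Derive (Derive z) t = (n - 4) * v t + (2 * n - 4) * z t - (n - 1) / 2 * z t ^ 2).
  { intros t. rewrite (Derive_ext (Derive z) v t Dz). apply is_derive_unique, Hv. }
  split; [|split; [|split]].
  - split; [|split].
    + intros t. exists (v t). apply Hz.
    + intros t. apply (ex_derive_ext v); [intros; symmetry; apply Dz|]. eexists; apply Hv.
    + intros t.
      apply (continuous_ext (fun s => (n - 4) * v s + (2 * n - 4) * z s - (n - 1) / 2 * z s ^ 2));
        [intros; symmetry; apply Dv|].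
      apply (@ex_derive_continuous R_AbsRing R_NormedModule). auto_derive.
      repeat split; eexists; [apply Hv|apply Hz|apply Hz].
  - intros t. rewrite Dv, Dz. fold n. field.
  - apply (is_lim_squeeze_0 _ (fun t => 6 * exp t)).
    + exists 0. intros t _. destruct (Hb t). assert (He := exp_pos t). split; nra.
    + replace (Finite 0) with (Rbar_mult 6 0) by (simpl; f_equal; ring).
      apply is_lim_scal_l, is_lim_exp_m.
  - apply (is_lim_squeeze_0 _ (fun t => C * exp (- (1/2) * t))).
    + exists T0. intros t Ht. destruct (Hb t). assert (He := exp_pos t). split; [nra|].
      replace (C * exp (- (1/2) * t)) with (exp t * (C * exp (- (3/2) * t)))
        by (replace (- (1/2) * t) with (t + - (3/2) * t) by field; rewrite exp_plus; ring).
      apply Rmult_le_compat_l; [lra|]. apply Hd. lra.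
    + replace (Finite 0) with (Rbar_mult C 0) by (simpl; f_equal; ring).
      apply is_lim_scal_l, is_lim_exp_neg_mul. lra.
Qed.

Lemma is_derive_shift (f : R -> R) c t d :
  is_derive f (t + c) d -> is_derive (fun s => f (s + c)) t d.
Proof.
  intros H. assert (Hc : is_derive (fun s => s + c) t 1) by (auto_derive; [exact I|ring]).
  assert (H2 := is_derive_comp f (fun s => s + c) t d 1 H Hc).
  unfold scal in H2; simpl in H2; unfold mult in H2; simpl in H2. rewrite Rmult_1_l in H2. exact H2.
Qed.

Lemma exists_solution_translates (N : nat) : (4 < N)%nat -> exists z : R -> R,
  forall c, is_solution N (fun t => z (t + c)) /\ positive_fun (fun t => z (t + c)).
Proof.
  intros HN. assert (Hn : 5 <= INR N) by (apply (le_INR 5 N) in HN; simpl in HN; lra).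
  destruct (exists_decaying_orbit (INR N) Hn) as [z [v [C [HC [Hz [Hv [Hb Hd]]]]]]].
  exists z. intros c. split; [|intros t; apply Hb].
  apply (is_solution_of_orbit N _ (fun t => v (t + c)) (C * exp (- (3/2) * c)) (- c)).
  - intros t. apply is_derive_shift, Hz.
  - intros t. apply is_derive_shift, Hv.
  - intros t. apply Hb.
  - intros t Ht. eapply Rle_trans; [apply Hd; lra|].
    replace (- (3/2) * (t + c)) with (- (3/2) * c + - (3/2) * t) by ring.
    rewrite exp_plus. lra.
Qed.

Lemma is_solution_lim_p_infty N z : is_solution N z -> is_lim z p_infty 0.
Proof.
  intros [_ [_ [_ Hlim]]].
  apply (is_lim_ext (fun t => exp (- 1 * t) * (exp t * z t))).
  - intros t. rewrite <- Rmult_assoc, <- exp_plus. replace (- 1 * t + t) with 0 by ring.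
    rewrite exp_0. ring.
  - replace (Finite 0) with (Rbar_mult 0 0) by (simpl; f_equal; ring).
    apply is_lim_mult; [apply is_lim_exp_neg_mul; lra|exact Hlim|exact I].
Qed.

Lemma periodic_lim_p_infty (z : R -> R) (d l : R) : 0 < d -> (forall t, z (t + d) = z t) ->
  is_lim z p_infty l -> z 0 = l.
Proof.
  intros Hd Hper Hlim.
  assert (Hconst : forall m, z (INR m * d) = z 0).
  { induction m as [|m IH]; [simpl; f_equal; ring|].
    rewrite S_INR. replace ((INR m + 1) * d) with (INR m * d + d) by ring. rewrite Hper. exact IH. }
  assert (Hseq : is_lim_seq (fun m => z (INR m * d)) l).
  { apply (is_lim_comp_seq z _ p_infty l Hlim); [exists 0%nat; discriminate|].
    replace p_infty with (Rbar_mult p_infty d) by (simpl; destruct (Rle_dec 0 d) as [H|H];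
      [destruct (Rle_lt_or_eq_dec 0 d H); [reflexivity|lra]|lra]).
    apply is_lim_seq_scal_r, is_lim_seq_INR. }
  apply (is_lim_seq_ext _ (fun _ => z 0)) in Hseq; [|exact Hconst].
  apply is_lim_seq_unique in Hseq. rewrite Lim_seq_const in Hseq. injection Hseq. auto.
Qed.

Lemma translate_injective (z : R -> R) : (forall t, 0 < z t) -> is_lim z p_infty 0 ->
  forall c1 c2, (fun t => z (t + c1)) = (fun t => z (t + c2)) -> c1 = c2.
Proof.
  intros Hpos Hlim c1 c2 Heq.
  assert (Hshift : forall t, z (t + c1) = z (t + c2))
    by (intros t; exact (f_equal (fun g => g t) Heq)).
  assert (Hper : forall a b, a < b -> (forall t, z (t + a) = z (t + b)) -> False).
  { intros a b Hab Hab'. assert (Hz := Hpos 0).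
    rewrite (periodic_lim_p_infty z (b - a) 0) in Hz; [lra|lra| |exact Hlim].
    intros t. specialize (Hab' (t - a)).
    replace (t - a + a) with t in Hab' by ring.
    replace (t - a + b) with (t + (b - a)) in Hab' by ring.
    symmetry. exact Hab'. }
  destruct (Rtotal_order c1 c2) as [Hlt|[Heq'|Hgt]]; [exfalso|exact Heq'|exfalso].
  - exact (Hper c1 c2 Hlt Hshift).
  - apply (Hper c2 c1 Hgt). intros t. symmetry. apply Hshift.
Qed.

Fixpoint trisect (u : nat -> R) (k : nat) : R * R :=
  match k with
  | O => (0, 1)
  | S k =>
      let (a, b) := trisect u k in
      if Rle_dec (u k) ((a + b) / 2) then (a + 2 * (b - a) / 3, b) else (a, a + (b - a) / 3)
  end.

Lemma trisect_step u k : fst (trisect u k) < snd (trisect u k) ->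
  fst (trisect u k) <= fst (trisect u (S k)) /\ fst (trisect u (S k)) < snd (trisect u (S k)) /\
  snd (trisect u (S k)) <= snd (trisect u k) /\
  (u k < fst (trisect u (S k)) \/ snd (trisect u (S k)) < u k).
Proof.
  simpl. destruct (trisect u k) as [a b]. simpl. intros Hab.
  destruct (Rle_dec (u k) ((a + b) / 2)); simpl; lra.
Qed.

Lemma trisect_nonempty u k : fst (trisect u k) < snd (trisect u k).
Proof. induction k as [|k IH]; [simpl; lra|apply trisect_step, IH]. Qed.

Lemma trisect_nested u i j : (i <= j)%nat ->
  fst (trisect u i) <= fst (trisect u j) /\ snd (trisect u j) <= snd (trisect u i).
Proof.
  induction 1 as [|j _ IH]; [lra|].
  destruct (trisect_step u j (trisect_nonempty u j)) as [H1 [_ [H2 _]]]. lra.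
Qed.

Lemma R_not_enumerable (u : nat -> R) : exists x, forall m, u m <> x.
Proof.
  assert (Hab : forall i j, fst (trisect u i) <= snd (trisect u j)).
  { intros i j. destruct (Nat.le_ge_cases i j) as [H|H];
      destruct (trisect_nested u _ _ H);
      generalize (trisect_nonempty u i) (trisect_nonempty u j); lra. }
  set (E := fun x => exists i, x = fst (trisect u i)).
  destruct (completeness E) as [x [Hub Hlub]].
  { exists (snd (trisect u 0)). intros y [i ->]. apply Hab. }
  { exists (fst (trisect u 0)), 0%nat. reflexivity. }
  exists x. intros m Hm.
  assert (H1 : fst (trisect u (S m)) <= x) by (apply Hub; exists (S m); reflexivity).
  assert (H2 : x <= snd (trisect u (S m))) by (apply Hlub; intros y [i ->]; apply Hab).
  destruct (trisect_step u m (trisect_nonempty u m)) as [_ [_ [_ H]]]. lra.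
Qed.

Lemma no_nat_cover_of_injective {A : Type} (g : R -> A) :
  (forall x y, g x = g y -> x = y) -> forall f : nat -> A, exists x, forall m, f m <> g x.
Proof.
  intros Hg f.
  set (u := fun m => match excluded_middle_informative (exists c, f m = g c) with
                     | left h => proj1_sig (constructive_indefinite_description _ h)
                     | right _ => 0
                     end).
  destruct (R_not_enumerable u) as [x Hx]. exists x. intros m Hm. apply (Hx m). unfold u.
  destruct (excluded_middle_informative _) as [h|h].
  - destruct (constructive_indefinite_description _ h) as [c Hc]. simpl. apply Hg. congruence.
  - exfalso. apply h. exists x. exact Hm.
Qed.

Theorem theorem3p6 (N : nat) (hN : (4 < N)%nat) :
  ~ (exists f : nat -> (R -> R),
       forall z : R -> R, is_solution N z -> positive_fun z ->
         exists n : nat, f n = z).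
Proof.
  intros [f Hf].
  destruct (exists_solution_translates N hN) as [z Hz].
  assert (Hinj : forall c1 c2, (fun t => z (t + c1)) = (fun t => z (t + c2)) -> c1 = c2).
  { apply translate_injective.
    - intros t. rewrite <- (Rplus_0_r t). apply (proj2 (Hz 0)).
    - apply (is_lim_ext (fun t => z (t + 0))); [intros t; rewrite Rplus_0_r; reflexivity|].
      apply (is_solution_lim_p_infty N), Hz. }
  destruct (no_nat_cover_of_injective _ Hinj f) as [c Hc].
  destruct (Hf _ (proj1 (Hz c)) (proj2 (Hz c))) as [m Hm].
  exact (Hc m Hm).
Qed.
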